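(* The problem ExistsNecJR under the Lottery model — decide whether there exists a committee $W\subseteq C$ with $|W|=k$ that satisfies JR with respect to every plausible approval profile — is solvable in polynomial time when every approval set to which any voter assigns positive probability contains exactly one candidate.
   Context: An ABC instance consists of voters $V=[n]$, candidates $C=[m]$, an approval profile $A=(A_1,\dots,A_n)$ with $A_i\subseteq C$, and a positive integer $k$. A committee is a set $W\subseteq C$ with $|W|=k$. $W$ satisfies justified representation (JR) with respect to $A$ if for every $V'\subseteq V$ with $|V'|\ge \frac{n}{k}$ and $\bigcap_{i\in V'}A_i\neq\emptyset$, there is $i\in V'$ with $A_i\cap W\neq\emptyset$. In the Lottery model, each voter $i$ is given an explicit probability distribution $\{(\lambda_r,S_r)\}_{r\in[s_i]}$ over approval sets $S_r\subseteq C$ with $\lambda_r>0$, $\sum_r\lambda_r=1$; voters' approval sets are drawn independently. A plausible approval profile is an approval profile with positive probability. *)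

From mathcomp Require Import all_boot all_order all_algebra.
Set Implicit Arguments. Unset Strict Implicit. Unset Printing Implicit Defensive.
Import Order.TTheory GRing.Theory Num.Theory.

(* Voters are 0..n-1, candidates 0..m-1.  Voter i's lottery is the
   list [(lambda_1,S_1); ...; (lambda_s,S_s)] = nth [::] lot i,
   where each S_r is given as a sequence of candidate indices (read as
   the set of its elements). *)
Record instance := Instance {
  inst_n : nat;
  inst_m : nat;
  inst_k : nat;
  inst_lot : seq (seq (rat * seq nat)) }.

Definition lottery (I : instance) (i : nat) : seq (rat * seq nat) :=
  nth [::] (inst_lot I) i.

Definition valid_instance (I : instance) : Prop :=
  [/\ 0 < inst_n I, 0 < inst_k I,
      size (inst_lot I) = inst_n I &
      forall i, i < inst_n I ->
        [/\ lottery I i != [::],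
            all (fun p => 0 < p.1)%R (lottery I i),
            (\sum_(p <- lottery I i) p.1)%R = 1%R &
            all (fun p => all (fun c => c < inst_m I) p.2) (lottery I i)]]%N.

Definition setof (m : nat) (S : seq nat) : {set 'I_m} :=
  [set c : 'I_m | val c \in S].

Definition singleton_lotteries (I : instance) : Prop :=
  forall i, (i < inst_n I)%N -> forall p, p \in lottery I i -> (0 < p.1)%R ->
    #|setof (inst_m I) p.2| = 1%N.

(* Probability of an approval profile A (voters draw independently). *)
Definition profile_prob (I : instance)
    (A : 'I_(inst_n I) -> {set 'I_(inst_m I)}) : rat :=
  (\prod_(i : 'I_(inst_n I))
     \sum_(p <- lottery I i | setof (inst_m I) p.2 == A i) p.1)%R.

Definition plausible (I : instance)
    (A : 'I_(inst_n I) -> {set 'I_(inst_m I)}) : Prop :=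
  (0 < profile_prob A)%R.

Definition JR (n m k : nat) (A : 'I_n -> {set 'I_m}) (W : {set 'I_m}) : Prop :=
  forall V' : {set 'I_n},
    (n%:R / k%:R <= (#|V'|%:R : rat))%R ->
    (exists c : 'I_m, forall i, i \in V' -> c \in A i) ->
    exists2 i, i \in V' & A i :&: W != set0.

Definition ExistsNecJR (I : instance) : Prop :=
  exists W : {set 'I_(inst_m I)},
    #|W| = inst_k I /\
    forall A : 'I_(inst_n I) -> {set 'I_(inst_m I)},
      plausible A -> @JR (inst_n I) (inst_m I) (inst_k I) A W.

(*  Computation model: unit-cost RAM with addition, truncated          *)
(*  subtraction and indirect addressing (polynomially equivalent to    *)
(*  Turing machines).                                                  *)

Inductive instr :=
  | IConst of nat & nat
  | IAdd of nat & nat & nat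
  | ISub of nat & nat & nat
  | ILoad of nat & nat
  | IStore of nat & nat
  | IJz of nat & nat
  | IJmp of nat
  | IHalt.

Definition memory := nat -> nat.

Definition upd (M : memory) (a v : nat) : memory :=
  fun x => if x == a then v else M x.

(* One step from a configuration (pc, M); instructions outside the
   program are treated as IHalt (and handled by [exec]). *)
Definition step (P : seq instr) (cfg : nat * memory) : nat * memory :=
  let: (pc, M) := cfg in
  match nth IHalt P pc with
  | IConst d c => (pc.+1, upd M d c)
  | IAdd d a b => (pc.+1, upd M d (M a + M b))
  | ISub d a b => (pc.+1, upd M d (M a - M b))
  | ILoad d a => (pc.+1, upd M d (M (M a)))
  | IStore a s => (pc.+1, upd M (M a) (M s))
  | IJz a l => (if M a == 0 then l else pc.+1, M)
  | IJmp l => (l, M)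
  | IHalt => (pc, M)
  end.

Fixpoint exec (P : seq instr) (t : nat) (cfg : nat * memory) : option memory :=
  match t with
  | 0 => None
  | t'.+1 =>
      match nth IHalt P cfg.1 with
      | IHalt => Some cfg.2
      | _ => exec P t' (step P cfg)
      end
  end.

Definition init_mem (s : seq nat) : memory :=
  fun x => if x is j.+1 then nth 0 s j else size s.

Definition bitsize (s : seq nat) : nat :=
  \sum_(x <- s) (trunc_log 2 x).+1.

Definition encode_entry (p : rat * seq nat) : seq nat :=
  [:: absz (numq p.1); absz (denq p.1); size p.2] ++ p.2.

Definition encode_voter (d : seq (rat * seq nat)) : seq nat :=
  size d :: flatten (map encode_entry d).

Definition encode (I : instance) : seq nat :=
  [:: inst_n I; inst_m I; inst_k I] ++ flatten (map encode_voter (inst_lot I)).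

(* With singleton lotteries, a plausible profile gives each voter a single
   candidate, chosen independently among the candidates she supports.  A group
   with a common approved candidate c therefore consists of supporters of c,
   and conversely all supporters of c may approve exactly c.  Hence a committee
   is JR for every plausible profile iff it contains every candidate supported
   by at least n/k voters, and a committee of size k exists iff there are at
   most k such candidates and k <= m.  A RAM program decides this in time
   linear in the input: in one pass over the encoding it tallies the
   supporters of each candidate in an array indexed by candidates, tagging a
   candidate with the last voter who mentioned it so that repeated mentions
   count once, and counts the candidates whose tally reaches ceil(n/k). *)

From mathcomp Require Import all_boot all_order all_algebra zify.
Set Implicit Arguments. Unset Strict Implicit. Unset Printing Implicit Defensive.
Import Order.TTheory GRing.Theory Num.Theory.

(** * Necessarily JR committees *)

Definition lottery_cands (l : seq (rat * seq nat)) : seq nat := flatten (map snd l).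

Definition supporters (I : instance) (c : 'I_(inst_m I)) : {set 'I_(inst_n I)} :=
  [set i : 'I_(inst_n I) | val c \in lottery_cands (lottery I i)].

Definition popular (I : instance) : {set 'I_(inst_m I)} :=
  [set c : 'I_(inst_m I) | inst_n I <= #|supporters c| * inst_k I].

Section PositiveWeights.

Local Open Scope ring_scope.

Variables (R : numDomainType) (T : eqType) (w : T -> R) (s : seq T) (P : pred T).
Hypothesis w_pos : all (fun x => 0 < w x) s.

Lemma sum_pos_weights_ge0 : 0 <= \sum_(x <- s | P x) w x.
Proof.
by rewrite big_seq_cond; apply: sumr_ge0 => x /andP[sx _]; exact: ltW (allP w_pos x sx).
Qed.

Lemma sum_pos_weights_neq0 : (\sum_(x <- s | P x) w x != 0) = has P s.
Proof.
rewrite big_seq_cond psumr_neq0 => [|x /andP[sx _]]; last exact: ltW (allP w_pos x sx).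
apply/hasP/hasP => [[x sx /andP[/andP[_ Px] _]]|[x sx Px]]; first by exists x.
by exists x => //; rewrite sx Px (allP w_pos).
Qed.

End PositiveWeights.

Lemma plausibleP I (A : 'I_(inst_n I) -> {set 'I_(inst_m I)}) : valid_instance I ->
  plausible A <->
  forall i : 'I_(inst_n I), exists2 p, p \in lottery I i & setof (inst_m I) p.2 = A i.
Proof.
case=> _ _ _ valid.
have pos (i : 'I_(inst_n I)) : all (fun p => 0 < p.1)%R (lottery I i).
  by have [] := valid i (ltn_ord i).
rewrite /plausible /profile_prob lt0r prodr_ge0 ?andbT; last first.
  by move=> i _; apply: sum_pos_weights_ge0.
split=> [/prodf_neq0 nz i | supp].
  by move: (nz i isT); rewrite sum_pos_weights_neq0 // => /hasP[p lp /eqP]; exists p.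
apply/prodf_neq0 => i _; rewrite sum_pos_weights_neq0 //.
by have [p lp Ep] := supp i; apply/hasP; exists p; rewrite // Ep.
Qed.

Lemma plausible_supporter I A (i : 'I_(inst_n I)) c : valid_instance I ->
  plausible A -> c \in A i -> i \in supporters c.
Proof.
move=> valid /(plausibleP _ valid) /(_ i) [p lp <-].
by rewrite !inE => pc; apply/flatten_mapP; exists p.
Qed.

Lemma setof_singleton m S (c : 'I_m) :
  #|setof m S| = 1 -> val c \in S -> setof m S = [set c].
Proof.
move=> /eqP/cards1P[d Ed] cS.
have : c \in setof m S by rewrite inE.
by rewrite Ed inE => /eqP ->.
Qed.

Lemma supporter_lottery I (i : 'I_(inst_n I)) c :
  valid_instance I -> singleton_lotteries I -> i \in supporters c ->
  exists2 p, p \in lottery I i & setof (inst_m I) p.2 = [set c].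
Proof.
case=> _ _ _ valid singleton; rewrite inE => /flatten_mapP[p lp pc].
have [_ /allP pos _ _] := valid i (ltn_ord i).
by exists p => //; apply: setof_singleton (singleton i (ltn_ord i) p lp (pos p lp)) pc.
Qed.

Lemma JR_thresholdE n k x : 0 < k ->
  ((n%:R / k%:R : rat) <= x%:R)%R = (n <= x * k).
Proof. by move=> k_gt0; rewrite ler_pdivrMr ?ltr0n // -natrM ler_nat. Qed.

Section Characterization.

Variable I : instance.
Hypotheses (valid : valid_instance I) (singleton : singleton_lotteries I).

Lemma popular_sub_necJR (W : {set 'I_(inst_m I)}) :
  (forall A, plausible A -> @JR (inst_n I) (inst_m I) (inst_k I) A W) ->
  popular I \subset W.
Proof.
move=> JR_W; apply/subsetP => c; rewrite inE => popc; apply/negPn/negP => cW.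
have [_ k_gt0 _ lot] := valid.
pose A (i : 'I_(inst_n I)) := if i \in supporters c then [set c]
                     else setof (inst_m I) (head (0%R, [::]) (lottery I i)).2.
have plA : plausible A.
  apply/plausibleP => // i; rewrite /A; case: ifP => [/supporter_lottery|_]; first exact.
  have [+ _ _ _] := lot i (ltn_ord i).
  by case: (lottery I i) => //= p l _; exists p; rewrite ?inE ?eqxx.
have common : exists d, forall i, i \in supporters c -> d \in A i.
  by exists c => i ic; rewrite /A ic set11.
have large : ((inst_n I)%:R / (inst_k I)%:R <= #|supporters c|%:R :> rat)%R.
  by rewrite JR_thresholdE.
have [i ic] := JR_W A plA (supporters c) large common.
by rewrite /A ic setI_eq0 disjoints1 cW.
Qed.

Lemma necJR_of_popular_sub (W : {set 'I_(inst_m I)}) : popular I \subset W ->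
  forall A, plausible A -> @JR (inst_n I) (inst_m I) (inst_k I) A W.
Proof.
move=> popW A plA V' large [c common].
have [n_gt0 k_gt0 _ _] := valid.
have V'c : V' \subset supporters c.
  by apply/subsetP => i iV'; apply: plausible_supporter (common i iV').
rewrite JR_thresholdE // in large.
have popc : c \in popular I.
  by rewrite inE (leq_trans large) // leq_mul2r subset_leq_card ?orbT.
have /card_gt0P[i iV'] : 0 < #|V'| by move: large; case: #|V'| => //=; lia.
by exists i => //; apply/set0Pn; exists c; rewrite inE common // (subsetP popW).
Qed.

End Characterization.

Lemma exists_superset_card (T : finType) (A : {set T}) n :
  #|A| <= n <= #|T| -> exists2 W : {set T}, A \subset W & #|W| = n.
Proof.
elim: n => [|n IH] /andP[le_An le_nT].
  by exists A => //; apply/eqP; rewrite -leqn0.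
have [eq_An|lt_An] := eqVneq #|A| n.+1; first by exists A.
have [|W AW cardW] := IH; first by rewrite (ltnW le_nT) andbT -ltnS ltn_neqAle lt_An.
have /card_gt0P[x] : 0 < #|~: W| by rewrite cardsCs setCK cardW subn_gt0.
rewrite inE => xW; exists (x |: W); first exact: subset_trans AW (subsetUr _ _).
by rewrite cardsU1 xW cardW.
Qed.

Lemma existsNecJRE I : valid_instance I -> singleton_lotteries I ->
  ExistsNecJR I <-> #|popular I| <= inst_k I <= inst_m I.
Proof.
move=> valid singleton; split=> [[W [cardW JR_W]]|bounds].
  rewrite -cardW subset_leq_card ?popular_sub_necJR //=.
  by rewrite -[X in _ <= X]card_ord max_card.
have [|W popW cardW] := @exists_superset_card _ (popular I) (inst_k I).
  by rewrite card_ord.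
by exists W; split=> //; apply: necJR_of_popular_sub.
Qed.

Definition cands_of (I : instance) : seq nat :=
  flatten (map lottery_cands (inst_lot I)).

Definition nsupporters (I : instance) (c : nat) : nat :=
  count (fun l => c \in lottery_cands l) (inst_lot I).

Lemma count_card_nth (T : Type) x0 (a : pred T) (s : seq T) n : size s = n ->
  count a s = #|[set i : 'I_n | a (nth x0 s i)]|.
Proof.
move=> <-; rewrite -sum1_count (big_nth x0) big_mkord -sum1dep_card.
by apply: eq_bigl.
Qed.

Lemma count_undup_card m (s : seq nat) (P : pred nat) :
  {in s, forall x, x < m} -> (forall x, P x -> x \in s) ->
  count P (undup s) = #|[set c : 'I_m | P c]|.
Proof.
move=> s_lt P_s.
have -> : #|[set c : 'I_m | P c]| = count P (iota 0 m).
  rewrite (count_card_nth 0 _ (size_iota 0 m)).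
  by apply: eq_card => i; rewrite !inE nth_iota.
rewrite -!size_filter; apply/perm_size/uniq_perm.
- by rewrite filter_uniq ?undup_uniq.
- by rewrite filter_uniq ?iota_uniq.
move=> x; rewrite !mem_filter mem_undup mem_iota /= add0n.
by case Px: (P x) => //=; apply/idP/idP => [/s_lt|_]; last exact: P_s.
Qed.

Lemma nsupportersE I (c : 'I_(inst_m I)) :
  valid_instance I -> nsupporters I (val c) = #|supporters c|.
Proof.
by case=> _ _ size_lot _; rewrite /nsupporters (count_card_nth [::] _ size_lot).
Qed.

Lemma cands_of_lt I : valid_instance I -> {in cands_of I, forall c, c < inst_m I}.
Proof.
case=> _ _ size_lot valid c /flatten_mapP[l /(nthP [::])[i lt_i <-]].
move=> /flatten_mapP[p lp pc].
rewrite size_lot in lt_i; have [_ _ _ /allP lt_m] := valid i lt_i.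
exact: (allP (lt_m p lp)).
Qed.

Lemma count_popular I : valid_instance I ->
  count (fun c => inst_n I <= nsupporters I c * inst_k I) (undup (cands_of I)) =
  #|popular I|.
Proof.
move=> valid; have [n_gt0 _ _ _] := valid.
rewrite (count_undup_card (m := inst_m I)); last 2 first.
- exact: cands_of_lt.
- move=> c le_n; have : 0 < nsupporters I c by move: le_n; case: nsupporters => //; lia.
  by rewrite -has_count => /hasP[l ll cl]; apply/flatten_mapP; exists l.
by apply: eq_card => c; rewrite !inE nsupportersE.
Qed.

(** * Executions of RAM programs *)

Section Execution.

Variable P : seq instr.

Inductive runs : nat -> nat * memory -> nat * memory -> Prop :=
| runs0 cfg : runs 0 cfg cfg
| runsS t cfg cfg' : nth IHalt P cfg.1 <> IHalt ->
    runs t (step P cfg) cfg' -> runs t.+1 cfg cfg'.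

Lemma exec_runs t t' cfg cfg' :
  runs t cfg cfg' -> exec P (t + t') cfg = exec P t' cfg'.
Proof.
elim=> // {}t {}cfg {}cfg' running _ IH; rewrite addSn /= -IH.
by case: (nth IHalt P cfg.1) running.
Qed.

Lemma runs_trans t1 t2 c1 c2 c3 :
  runs t1 c1 c2 -> runs t2 c2 c3 -> runs (t1 + t2) c1 c3.
Proof. by elim=> // {}t1 {}c1 {}c2 running _ IH /IH; rewrite addSn; constructor. Qed.

Definition reach (b : nat) (cfg : nat * memory) (Q : nat * memory -> Prop) :=
  exists t cfg', [/\ t <= b, runs t cfg cfg' & Q cfg'].

Lemma reach_now b cfg (Q : nat * memory -> Prop) : Q cfg -> reach b cfg Q.
Proof. by exists 0, cfg; split=> //; constructor. Qed.

Lemma reach_step b cfg Q : nth IHalt P cfg.1 <> IHalt ->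
  reach b (step P cfg) Q -> reach b.+1 cfg Q.
Proof.
by move=> running [t [cfg' [? ? ?]]]; exists t.+1, cfg'; split=> //; constructor.
Qed.

Lemma reach_mono b b' cfg (Q Q' : nat * memory -> Prop) :
  b <= b' -> (forall cfg, Q cfg -> Q' cfg) -> reach b cfg Q -> reach b' cfg Q'.
Proof.
move=> le_bb' QQ' [t [cfg' [le_tb ? ?]]].
by exists t, cfg'; split; [exact: leq_trans le_bb' | | exact: QQ'].
Qed.

Lemma reach_le b b' cfg Q : b <= b' -> reach b cfg Q -> reach b' cfg Q.
Proof. by move=> le_bb'; apply: reach_mono. Qed.

Lemma reach_seq b1 b2 cfg Q :
  reach b1 cfg (fun cfg' => reach b2 cfg' Q) -> reach (b1 + b2) cfg Q.
Proof.
move=> [t1 [c1 [? r1 [t2 [c2 [? r2 ?]]]]]].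
by exists (t1 + t2), c2; split; [exact: leq_add | exact: runs_trans r1 r2 |].
Qed.

End Execution.

(** * The decision program *)

(* Registers: 1 holds the constant 1, 2 the read pointer into the input,
   3, 4, 5 hold n, m, k, 6 the base B of the tally array, 7 the threshold
   q = ceil(n/k), 8 the number of candidates whose tally has reached q, 10 and
   11 the entries of the current voter and the candidates of the current entry
   still to be read, 12 the current voter (counted from 1); 0 receives the
   answer.  Addresses from 16 on form the heap.  The input is first moved up to
   D = 8|s|, so that the heap from 2D on is zero; there, at B + 2c and
   B + 2c + 1, the tally array records the last voter who mentioned candidate c
   and the number of voters who did.  Equality a = b is tested as
   (a - b) + (b - a) = 0.  The comments give the address of the next
   instruction. *)
Definition prog : seq instr := [::
 IAdd 0 0 0; IAdd 0 0 0; IAdd 0 0 0; IStore 0 1; IConst 1 1; IAdd 0 0 1;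
 IStore 0 2; IAdd 0 0 1; IStore 0 3; IAdd 0 0 1; IStore 0 4; IAdd 0 0 1;
 IStore 0 5; IAdd 0 0 1; IStore 0 6; IAdd 0 0 1; IStore 0 7; IAdd 0 0 1;
 IStore 0 8; IAdd 0 0 1; IStore 0 9; IAdd 0 0 1; IStore 0 10; IAdd 0 0 1;
 IStore 0 11; IAdd 0 0 1; IStore 0 12; IAdd 0 0 1; IStore 0 13; IAdd 0 0 1;
 IStore 0 14; IAdd 0 0 1; IStore 0 15; (* 33 *)
 IConst 2 14; ISub 2 0 2; IConst 3 15; (* 36 *)
 IAdd 4 3 1; ISub 5 2 4; IJz 5 44; ILoad 6 4; IAdd 5 2 3; IStore 5 6;
 IAdd 3 3 1; IJmp 36; (* 44 *)
 ILoad 3 2; IAdd 2 2 1; ILoad 4 2; IAdd 2 2 1; ILoad 5 2; IAdd 2 2 1;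
 IAdd 6 2 2; IConst 7 0; IConst 13 0; (* 53 *)
 ISub 14 3 13; IJz 14 58; IAdd 13 13 5; IAdd 7 7 1; IJmp 53; (* 58 *)
 IConst 8 0; IConst 12 1; (* 60 *)
 ISub 13 12 3; IJz 13 63; IJmp 96; (* 63 *)
 ILoad 10 2; IAdd 2 2 1; (* 65 *)
 IJz 10 94; ISub 10 10 1; IAdd 2 2 1; IAdd 2 2 1; ILoad 11 2; IAdd 2 2 1; (* 71 *)
 IJz 11 65; ISub 11 11 1; ILoad 13 2; IAdd 2 2 1; IAdd 13 13 13; IAdd 13 13 6;
 ILoad 14 13; ISub 15 14 12; ISub 0 12 14; IAdd 15 15 0; IJz 15 71; (* 82 *)
 IStore 13 12; IAdd 13 13 1; ILoad 14 13; IAdd 14 14 1; IStore 13 14;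
 ISub 15 14 7; ISub 0 7 14; IAdd 15 15 0; IJz 15 92; IJmp 71; (* 92 *)
 IAdd 8 8 1; IJmp 71; (* 94 *)
 IAdd 12 12 1; IJmp 60; (* 96 *)
 ISub 13 8 5; ISub 14 5 4; IAdd 13 13 14; IConst 0 0; IJz 13 102; IHalt;
 IConst 0 1; IHalt ].

Definition heap_agree (M H : memory) := forall x, 16 <= x -> M x = H x.

Lemma reach_upd_reg b pc M H d v Q : d < 16 -> heap_agree M H ->
  (forall M', M' d = v -> (forall r, r < 16 -> r != d -> M' r = M r) ->
     heap_agree M' H -> reach prog b (pc, M') Q) ->
  reach prog b (pc, upd M d v) Q.
Proof.
move=> lt_d16 MH; apply.
- by rewrite /upd eqxx.
- by move=> r _ /negbTE rd; rewrite /upd rd.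
- by move=> x le16x; rewrite /upd ifN ?MH //; apply/eqP; lia.
Qed.

Lemma reach_upd_heap b pc M H d v Q : 16 <= d -> heap_agree M H ->
  (forall M', (forall r, r < 16 -> M' r = M r) -> heap_agree M' (upd H d v) ->
     reach prog b (pc, M') Q) ->
  reach prog b (pc, upd M d v) Q.
Proof.
move=> le16d MH; apply.
- by move=> r ltr16; rewrite /upd ifN //; apply/eqP; lia.
- by move=> x le16x; rewrite /upd; case: ifP=> // _; rewrite MH.
Qed.

(* Symbolic execution of one instruction of [prog].  The memory is kept as a
   variable [M] with hypotheses [M r = e] on registers and [heap_agree M H]
   for an abstract heap [H]; after an update the stale facts are transferred
   to the new memory or dropped. *)
Ltac rewrite_mem M MH :=
  repeat match goal with E : M ?r = _ |- context[M ?r] => rewrite E end;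
  repeat match goal with |- context[M ?x] => rewrite (MH x); [| lia] end;
  lazymatch type of MH with heap_agree _ ?H =>
  repeat match goal with E : H ?x = _ |- context[H ?x] => rewrite E end end.

Ltac transfer_regs M M' same :=
  repeat match goal with E : M ?r = ?e |- _ =>
    let E' := fresh in (have E' : M' r = e by rewrite same // E);
    clear E; rename E' into E
  | E : M ?r = ?e |- _ => clear E end.

Ltac advance :=
  apply: reach_step; [by [] |];
  cbv beta iota zeta delta [step prog nth fst snd]; fold prog;
  lazymatch goal with
  | |- reach _ _ (_, upd ?M ?d ?v) _ =>
    lazymatch goal with MH : heap_agree M ?H |- _ =>
      rewrite_mem M MH;
      first [ apply: (reach_upd_reg _ MH); [reflexivity|];
              let M' := fresh "M" in let Ed := fresh "R" in
              let same := fresh "same" in let MH' := fresh "MH" in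
              move=> M' Ed same MH'; transfer_regs M M' same; clear same MH M;
              rename M' into M; rename MH' into MH
            | apply: (reach_upd_heap _ MH); [lia|];
              let M' := fresh "M" in let same := fresh "same" in
              let MH' := fresh "MH" in
              move=> M' same MH'; transfer_regs M M' same; clear same MH M;
              rename M' into M; rename MH' into MH ]
    end
  | |- reach _ _ (_, ?M) _ =>
    lazymatch goal with MH : heap_agree M ?H |- _ => rewrite_mem M MH end
  end.

Ltac rewrite_reg r :=
  match goal with E : ?M r = _ |- context[?M r] => rewrite E end.

Definition stored (H : memory) (p : nat) (r : seq nat) :=
  forall j, j < size r -> H (p + j) = nth 0 r j.

Lemma stored_head H p x r : stored H p (x :: r) -> H p = x.
Proof. by move=> Hr; rewrite -[p]addn0 Hr. Qed.

Lemma stored_behead H p x r : stored H p (x :: r) -> stored H (p + 1) r.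
Proof. by move=> Hr j lt_jr; rewrite -addnA add1n (Hr j.+1). Qed.

Lemma stored_upd H p r a v : p + size r <= a -> stored H p r -> stored (upd H a v) p r.
Proof. by move=> le_ra Hr j lt_jr; rewrite /upd ifN ?Hr //; apply/eqP; lia. Qed.

(* [X] lists the candidates mentioned so far by voter [v], [prev c] is the
   number of earlier voters who mentioned [c]. *)
Definition tally_array (H : memory) (B v : nat) (prev : nat -> nat) (X : seq nat) :=
  forall c, [/\ H (c + c + B) <= v, (H (c + c + B) == v) = (c \in X)
              & H (c + c + B + 1) = prev c + (c \in X)].

Lemma tally_array_mark H B v prev X c0 : c0 \notin X ->
  tally_array H B v prev X ->
  tally_array (upd (upd H (c0 + c0 + B) v) (c0 + c0 + B + 1) (prev c0 + 1))
    B v prev (X ++ [:: c0]).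
Proof.
move=> /negbTE c0X tally c; have [le_v eq_v cnt] := tally c.
rewrite /upd mem_cat inE; have [->|ne_cc0] := eqVneq c c0.
  by rewrite c0X ifN ?eqxx /= ?addn1 //; apply/eqP; lia.
by rewrite orbF !ifN //; apply/eqP; move/eqP: ne_cc0; lia.
Qed.

Lemma count_geq_bump (U : seq nat) (f g : nat -> nat) c0 q : uniq U -> c0 \in U ->
  (forall c, c != c0 -> g c = f c) -> g c0 = (f c0).+1 ->
  count (fun c => q <= g c) U = count (fun c => q <= f c) U + (g c0 == q).
Proof.
elim: U => //= a U IH /andP[aU uU]; rewrite in_cons => /orP[/eqP ->|c0U] gf gc0.
  have -> : count (fun c => q <= g c) U = count (fun c => q <= f c) U.
    by apply: eq_in_count => c cU; rewrite gf //; apply: contraNneq aU => <-.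
  by rewrite gc0 leq_eqVlt ltnS eq_sym; case: eqP; lia.
rewrite (IH uU c0U gf gc0) gf; first lia.
by apply: contraNneq aU => ->.
Qed.

Lemma count_geq_mark q (prev : nat -> nat) (U X : seq nat) c0 : uniq U -> c0 \in U -> c0 \notin X ->
  count (fun c => q <= prev c + (c \in X ++ [:: c0])) U =
  count (fun c => q <= prev c + (c \in X)) U + (prev c0 + 1 == q).
Proof.
move=> uU c0U /negbTE c0X.
rewrite (@count_geq_bump U (fun c => prev c + (c \in X))
  (fun c => prev c + (c \in X ++ [:: c0])) c0) //.
- by rewrite mem_cat inE eqxx orbT addn1.
- by move=> c /negbTE ne_cc0; rewrite mem_cat inE ne_cc0 orbF.
- by rewrite mem_cat inE eqxx orbT c0X addn1 addn0.
Qed.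

Lemma tally_array_eq_mem H B v prev X Y :
  X =i Y -> tally_array H B v prev X -> tally_array H B v prev Y.
Proof. by move=> eqXY tally c; rewrite -eqXY. Qed.

Definition tally_state (n m k B q v : nat) (prev : nat -> nat) (U X : seq nat)
    (p : nat) (rest : seq nat) (pc : nat) (cfg : nat * memory) :=
  cfg.1 = pc /\ exists H, heap_agree cfg.2 H /\ cfg.2 1 = 1 /\ cfg.2 3 = n /\
   cfg.2 4 = m /\ cfg.2 5 = k /\ cfg.2 6 = B /\ cfg.2 7 = q /\ cfg.2 12 = v /\
   cfg.2 8 = count (fun c => q <= prev c + (c \in X)) U /\ cfg.2 2 = p /\
   stored H p rest /\ p + size rest <= B /\ tally_array H B v prev X.

Lemma tally_stateI n m k B q v prev U X p rest {pc : nat} M H :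
  heap_agree M H -> M 1 = 1 -> M 3 = n -> M 4 = m -> M 5 = k -> M 6 = B ->
  M 7 = q -> M 12 = v -> M 8 = count (fun c => q <= prev c + (c \in X)) U ->
  M 2 = p -> stored H p rest -> p + size rest <= B -> tally_array H B v prev X ->
  tally_state n m k B q v prev U X p rest pc (pc, M).
Proof. by move=> *; split=> //; exists H. Qed.

Lemma tally_state_jump n m k B q v prev U X p rest pc pc' M :
  tally_state n m k B q v prev U X p rest pc (pc, M) ->
  tally_state n m k B q v prev U X p rest pc' (pc', M).
Proof. by case. Qed.

Lemma cand_step n m k B q v prev U c0 X p rest left s cfg :
  16 <= p -> c0 \in U -> uniq U ->
  tally_state n m k B q v prev U X p (c0 :: rest) 71 cfg ->
  cfg.2 10 = left -> cfg.2 11 = s.+1 ->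
  reach prog 22 cfg (fun cfg' =>
    [/\ tally_state n m k B q v prev U (X ++ [:: c0]) (p + 1) rest 71 cfg',
        cfg'.2 10 = left & cfg'.2 11 = s]).
Proof.
case: cfg => _ M le16p c0U uU [/= -> [H [MH [R1 [R3 [R4 [R5 [R6 [R7 [R12 [R8 [R2
  [Hin [le_pB tally]]]]]]]]]]]]]] /= R10 R11.
have Hc0 : H p = c0 by exact: stored_head Hin.
have {}Hin := stored_behead Hin.
have [_ eq_v cnt] := tally c0.
have le_rest : p + 1 + size rest <= B by move: le_pB => /=; lia.
advance; rewrite /=; do 9 advance.
have [c0X|c0X] := boolP (c0 \in X).
  have eqX : X ++ [:: c0] =i X by move=> c; rewrite mem_cat inE orb_idr // => /eqP ->.
  move: eq_v; rewrite c0X => /eqP Hv; advance; rewrite subnn /=.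
  apply: reach_now; split=> //=; last by rewrite_reg 11; lia.
  apply: (tally_stateI MH) => //.
  - by rewrite R8; apply: eq_count => c; rewrite eqX.
  - by apply: tally_array_eq_mem tally => c; rewrite eqX.
have tally' := tally_array_mark c0X tally.
have cnt' : upd H (c0 + c0 + B) v (c0 + c0 + B + 1) = prev c0.
  by rewrite /upd ifN ?cnt ?(negbTE c0X) ?addn0 //; apply/eqP; lia.
have cnt_mark := count_geq_mark q prev uU c0U c0X.
have Hin' : stored (upd (upd H (c0 + c0 + B) v) (c0 + c0 + B + 1) (prev c0 + 1))
              (p + 1) rest.
  by apply: stored_upd; [lia | apply: stored_upd; [lia | exact: Hin]].
move: eq_v; rewrite (negbTE c0X) => /eqP ne_v.
advance; rewrite ifN; last by apply/eqP; lia.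
do 8 advance.
set H' := upd (upd H _ _) _ _ in MH tally' Hin'.
have [reached|not_reached] := eqVneq (prev c0 + 1) q.
  advance; rewrite ifT; last by apply/eqP; lia.
  do 2 advance; apply: reach_now; split=> //=; last by rewrite_reg 11; lia.
  apply: (tally_stateI MH) => //.
  by rewrite_reg 8; rewrite cnt_mark reached eqxx addn1.
advance; rewrite ifN; last by apply/eqP; move/eqP: not_reached; lia.
advance; apply: reach_now; split=> //=; last by rewrite_reg 11; lia.
apply: (tally_stateI MH) => //.
by rewrite R8 cnt_mark (negbTE not_reached) addn0.
Qed.

Lemma cands_loop n m k B q v prev U X p xs rest left cfg :
  16 <= p -> {subset xs <= U} -> uniq U ->
  tally_state n m k B q v prev U X p (xs ++ rest) 71 cfg ->
  cfg.2 10 = left -> cfg.2 11 = size xs ->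
  reach prog (22 * size xs + 1) cfg (fun cfg' =>
    tally_state n m k B q v prev U (X ++ xs) (p + size xs) rest 65 cfg' /\
    cfg'.2 10 = left).
Proof.
elim: xs X p cfg => [|c0 xs IH] X p [pc M] le16p sub_xsU uU state /= R10 R11.
  have [/= pc71 [H [MH _]]] := state; subst pc.
  advance; apply: reach_now; split=> //=.
  by rewrite addn0 cats0; apply: tally_state_jump state.
have c0U : c0 \in U by apply: sub_xsU; rewrite inE eqxx.
have {}sub_xsU : {subset xs <= U} by move=> x xsx; apply: sub_xsU; rewrite inE xsx orbT.
apply: (reach_le (b := 22 + (22 * size xs + 1))); first by rewrite /=; lia.
apply: reach_seq; apply: reach_mono (cand_step le16p c0U uU state R10 R11) => //.
move=> cfg [state' R10' R11'].
have -> : p + size (c0 :: xs) = p + 1 + size xs by rewrite /=; lia.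
by rewrite -cat1s catA; apply: IH => //; lia.
Qed.

Definition encode_entries (l : seq (rat * seq nat)) : seq nat :=
  flatten (map encode_entry l).

Lemma entries_loop n m k B q v prev U X p l rest cfg :
  16 <= p -> {subset lottery_cands l <= U} -> uniq U ->
  tally_state n m k B q v prev U X p (encode_entries l ++ rest) 65 cfg ->
  cfg.2 10 = size l ->
  reach prog (22 * size (encode_entries l) + 1) cfg
    (tally_state n m k B q v prev U (X ++ lottery_cands l)
       (p + size (encode_entries l)) rest 94).
Proof.
elim: l X p cfg => [|[w S] l IH] X p [pc M] le16p sub_lU uU state R10;
  rewrite /= in R10.
  have [/= pc65 [H [MH _]]] := state; subst pc.
  advance; apply: reach_now => /=.
  by rewrite addn0 cats0; apply: tally_state_jump state.
have sub_SU : {subset S <= U} by move=> x Sx; apply: sub_lU; rewrite mem_cat Sx.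
have {}sub_lU : {subset lottery_cands l <= U}.
  by move=> x lx; apply: sub_lU; rewrite mem_cat lx orbT.
have -> : encode_entries ((w, S) :: l) =
          [:: absz (numq w); absz (denq w); size S] ++ S ++ encode_entries l by [].
case: state => /= pc65 [H [MH [R1 [R3 [R4 [R5 [R6 [R7 [R12 [R8 [R2
  [Hin [le_pB tally]]]]]]]]]]]]]; subst pc.
rewrite -catA /= -/(encode_entries l) in Hin le_pB.
have HS := stored_head (stored_behead (stored_behead Hin)).
have {}Hin := stored_behead (stored_behead (stored_behead Hin)).
apply: (reach_le (b := 6 + ((22 * size S + 1) + (22 * size (encode_entries l) + 1)))).
  by rewrite /= size_cat; lia.
advance; rewrite /=; do 5 advance.
apply: reach_seq.
have state' : tally_state n m k B q v prev U X (p + 1 + 1 + 1)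
                (S ++ encode_entries l ++ rest) 71 (71, M).
  by apply: (tally_stateI MH) => //; move: le_pB; rewrite !size_cat; lia.
have R10' : M 10 = size l by rewrite_reg 10; rewrite subn1.
have R11 : M 11 = size S by rewrite_reg 11.
have le16p' : 16 <= p + 1 + 1 + 1 by lia.
apply: reach_mono (cands_loop le16p' sub_SU uU state' R10' R11) => // cfg [state'' R10''].
rewrite catA (_ : p + _ = p + 1 + 1 + 1 + size S + size (encode_entries l)); last first.
  by rewrite size_cat; lia.
apply: reach_mono (IH _ _ _ _ sub_lU uU state'' R10'') => //; lia.
Qed.

Lemma tally_array_next H B v prev X :
  tally_array H B v prev X ->
  tally_array H B v.+1 (fun c => prev c + (c \in X)) [::].
Proof.
move=> tally c; have [le_v _ cnt] := tally c.
by split; rewrite ?in_nil ?addn0 //; apply/eqP; lia.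
Qed.

Definition encode_voters (ds : seq (seq (rat * seq nat))) : seq nat :=
  flatten (map encode_voter ds).

Definition tally_done (m k q : nat) (U : seq nat) (tally : nat -> nat)
    (cfg : nat * memory) :=
  cfg.1 = 96 /\ exists H, heap_agree cfg.2 H /\ cfg.2 4 = m /\ cfg.2 5 = k /\
   cfg.2 8 = count (fun c => q <= tally c) U.

Lemma voter_step n m k B q v prev U p d rest cfg :
  16 <= p -> v <= n -> {subset lottery_cands d <= U} -> uniq U ->
  tally_state n m k B q v prev U [::] p (encode_voter d ++ rest) 60 cfg ->
  reach prog (22 * size (encode_entries d) + 7) cfg
    (tally_state n m k B q v.+1 (fun c => prev c + (c \in lottery_cands d)) U
       [::] (p + 1 + size (encode_entries d)) rest 60).
Proof.
move: cfg => [pc M] le16p le_vn sub_dU uU.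
case=> /= pc60 [H [MH [R1 [R3 [R4 [R5 [R6 [R7 [R12 [R8 [R2
  [Hin [le_pB tally]]]]]]]]]]]]]; subst pc.
rewrite /= -/(encode_entries d) in Hin le_pB.
have Hd := stored_head Hin.
have {}Hin := stored_behead Hin.
apply: (reach_le (b := 4 + ((22 * size (encode_entries d) + 1) + 2))); first lia.
do 2 advance; rewrite ifT; last by apply/eqP; lia.
do 2 advance.
have state : tally_state n m k B q v prev U [::] (p + 1)
               (encode_entries d ++ rest) 65 (65, M).
  by apply: (tally_stateI MH) => //; move: le_pB; rewrite size_cat; lia.
have le16p' : 16 <= p + 1 by lia.
apply: reach_seq; apply: reach_mono (entries_loop le16p' sub_dU uU state _) => //.
case=> pc M' [/= pc94 [H' [MH' [R1' [R3' [R4' [R5' [R6' [R7' [R12' [R8' [R2'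
  [Hin' [le_pB' tally']]]]]]]]]]]]]]; subst pc.
do 2 advance; apply: reach_now.
apply: (tally_stateI MH') => //.
- by rewrite_reg 12; rewrite addn1.
- by rewrite R8'; apply: eq_count => c; rewrite in_nil addn0.
- exact: tally_array_next.
Qed.

Lemma voters_loop n m k B q v prev U p ds rest cfg :
  16 <= p -> v + size ds = n.+1 ->
  {subset flatten (map lottery_cands ds) <= U} -> uniq U ->
  tally_state n m k B q v prev U [::] p (encode_voters ds ++ rest) 60 cfg ->
  reach prog (22 * size (encode_voters ds) + 3) cfg
    (tally_done m k q U (fun c => prev c + count (fun d => c \in lottery_cands d) ds)).
Proof.
elim: ds v prev p cfg => [|d ds IH] v prev p [pc M] le16p Ev sub_dsU uU.
  case=> /= pc60 [H [MH [R1 [R3 [R4 [R5 [R6 [R7 [R12 [R8 _]]]]]]]]]]; subst pc.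
  do 2 advance; rewrite ifN; last by apply/eqP; move: Ev => /=; lia.
  advance; apply: reach_now; split=> //; exists H; do 3 (split=> //).
have sub_dU : {subset lottery_cands d <= U}.
  by move=> x dx; apply: sub_dsU; rewrite /= mem_cat dx.
have {}sub_dsU : {subset flatten (map lottery_cands ds) <= U}.
  by move=> x dsx; apply: sub_dsU; rewrite /= mem_cat dsx orbT.
have le_vn : v <= n by move: Ev => /=; lia.
have -> : encode_voters (d :: ds) ++ rest = encode_voter d ++ encode_voters ds ++ rest.
  by rewrite [RHS]catA.
move=> state.
have -> : size (encode_voters (d :: ds)) =
          (size (encode_entries d)).+1 + size (encode_voters ds) by exact: size_cat.
apply: (reach_le (b := 22 * size (encode_entries d) + 7 +
                       (22 * size (encode_voters ds) + 3))); first lia.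
apply: reach_seq; apply: reach_mono (voter_step le16p le_vn sub_dU uU state) => //.
move=> cfg state'; apply: reach_mono (IH _ _ _ _ _ _ sub_dsU uU state') => //.
- case=> pc' M' [/= -> [H [MH [R4 [R5 R8]]]]].
  split=> //=; exists H; do 3 (split=> //).
  by rewrite R8; apply: eq_count => c; rewrite addnA.
- lia.
- by move: Ev => /=; lia.
Qed.

Definition input_moved (s : seq nat) (D : nat) (cfg : nat * memory) :=
  cfg.1 = 44 /\ exists H, heap_agree cfg.2 H /\ cfg.2 1 = 1 /\ cfg.2 2 = D /\
    stored H D s /\ (forall x, D + D <= x -> H x = 0).

Lemma copy_loop s D fuel : forall j M H, D - 1 - j = fuel ->
  heap_agree M H -> M 1 = 1 -> M 2 = D -> M 3 = j -> 15 <= j -> j <= D - 1 ->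
  size s <= D - 1 -> 24 <= D ->
  (forall x, 16 <= x -> x < D -> H x = init_mem s x) ->
  (forall j', j' < j -> H (D + j') = nth 0 s j') ->
  (forall x, D + D - 1 <= x -> H x = 0) ->
  reach prog (8 * fuel + 3) (36, M) (input_moved s D).
Proof.
elim: fuel => [|f IH] j M H Ef MH R1 R2 R3 le15j le_jD le_sD le24D low copied high.
  do 3 advance; rewrite ifT; last by apply/eqP; lia.
  apply: reach_now; split=> //; exists H; do 3 (split=> //); split.
  - by move=> j' lt_j's; apply: copied; lia.
  - by move=> x le_x; apply: high; lia.
apply: (reach_le (b := 8 + (8 * f + 3))); first lia.
have lowj : H (j + 1) = init_mem s (j + 1) by apply: low; lia.
do 3 advance; rewrite ifN; last by apply/eqP; lia.
do 5 advance.
apply: (IH (j + 1) M (upd H (D + j) (init_mem s (j + 1)))) => //; try lia.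
- by move=> x le16x lt_xD; rewrite /upd ifN ?low //; apply/eqP; lia.
- move=> j' lt_j'j; rewrite /upd; case: eqP => [E|NE]; last by apply: copied; lia.
  have ej : j' = j by lia.
  by rewrite ej addn1.
- by move=> x le_x; rewrite /upd ifN ?high //; apply/eqP; lia.
Qed.

Lemma relocate_regs s M : 3 <= size s -> heap_agree M (init_mem s) ->
  M 0 = size s -> M 1 = nth 0 s 0 -> M 2 = nth 0 s 1 -> M 3 = nth 0 s 2 ->
  M 4 = nth 0 s 3 -> M 5 = nth 0 s 4 -> M 6 = nth 0 s 5 -> M 7 = nth 0 s 6 ->
  M 8 = nth 0 s 7 -> M 9 = nth 0 s 8 -> M 10 = nth 0 s 9 -> M 11 = nth 0 s 10 ->
  M 12 = nth 0 s 11 -> M 13 = nth 0 s 12 -> M 14 = nth 0 s 13 -> M 15 = nth 0 s 14 ->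
  reach prog (8 * (8 * size s) + 60) (0, M) (input_moved s (8 * size s)).
Proof.
move=> le3s MH R0 R1 R2 R3 R4 R5 R6 R7 R8 R9 R10 R11 R12 R13 R14 R15.
apply: (reach_le (b := 36 + (8 * (8 * size s - 1 - 15) + 3))); first lia.
do 36 advance.
have {}R2 : M 2 = 8 * size s by rewrite_reg 2; lia.
move: MH; set H := upd _ _ _ => MH.
apply: (copy_loop (j := 15) _ MH) => //; try lia.
- move=> x le16x lt_xD; rewrite /H /upd.
  by repeat (rewrite ifN; last by apply/eqP; lia).
- move=> j lt_j15; rewrite /H /upd.
  do 15 (case: j lt_j15 => [|j] lt_j15; first by repeat (case: ifP => /eqP ?; try lia)).
  lia.
- move=> x le_x; rewrite /H /upd; repeat (rewrite ifN; last by apply/eqP; lia).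
  case: x le_x => [|x] le_x /=; first lia.
  by rewrite nth_default //; lia.
Qed.

Lemma relocate s : 3 <= size s ->
  reach prog (8 * (8 * size s) + 60) (0, init_mem s) (input_moved s (8 * size s)).
Proof. by move=> le3s; apply: relocate_regs. Qed.

Definition threshold_found n m k p B H (cfg : nat * memory) :=
  [/\ cfg.1 = 58, heap_agree cfg.2 H,
      [/\ cfg.2 1 = 1, cfg.2 2 = p, cfg.2 3 = n, cfg.2 4 = m & cfg.2 5 = k],
      cfg.2 6 = B & forall x, (cfg.2 7 <= x) = (n <= x * k)].

Lemma ceil_div_leqE n k q x : 0 < k -> n <= q * k -> (q = 0 \/ (q - 1) * k < n) ->
  (q <= x) = (n <= x * k).
Proof.
move=> k_gt0 le_nq [q0|lt_q1n].
  by move: le_nq; rewrite q0 mul0n leqn0 => /eqP ->; rewrite !leq0n.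
apply/idP/idP => [le_qx|le_nx].
  by apply: leq_trans le_nq _; rewrite leq_mul2r le_qx orbT.
rewrite leqNgt; apply/negP => lt_xq.
have := leq_mul (_ : x <= q - 1) (leqnn k); lia.
Qed.

Lemma threshold_loop n m k p B H fuel : forall q M, n - q * k <= fuel ->
  heap_agree M H -> M 1 = 1 -> M 2 = p -> M 3 = n -> M 4 = m -> M 5 = k -> M 6 = B ->
  M 7 = q -> M 13 = q * k -> 0 < k -> (q = 0 \/ (q - 1) * k < n) ->
  reach prog (5 * fuel + 2) (53, M) (threshold_found n m k p B H).
Proof.
elim: fuel => [|f IH] q M le_f MH R1 R2 R3 R4 R5 R6 R7 R13 k_gt0 q_least.
  do 2 advance; rewrite ifT; last by apply/eqP; lia.
  apply: reach_now; split=> //= x; rewrite R7.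
  by apply: ceil_div_leqE => //; lia.
have [le_nq|lt_qn] := leqP n (q * k).
  apply: (reach_le (b := 2)); first lia.
  do 2 advance; rewrite ifT; last by apply/eqP; lia.
  by apply: reach_now; split=> //= x; rewrite R7; apply: ceil_div_leqE.
apply: (reach_le (b := 5 + (5 * f + 2))); first lia.
do 2 advance; rewrite ifN; last by apply/eqP; lia.
do 3 advance.
apply: (IH (q + 1) M) => //; try lia.
Qed.

Lemma size_encode I : size (encode I) = (size (encode_voters (inst_lot I))).+3.
Proof. by []. Qed.

Lemma count_block I cfg : valid_instance I ->
  input_moved (encode I) (8 * size (encode I)) cfg ->
  reach prog (9 + (5 * inst_n I + 2) + (2 + (22 * size (encode_voters (inst_lot I)) + 3)))
    cfg (fun cfg' => exists2 q, (forall x, (q <= x) = (inst_n I <= x * inst_k I)) &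
           tally_done (inst_m I) (inst_k I) q (undup (cands_of I)) (nsupporters I) cfg').
Proof.
set D := 8 * size (encode I) => -[n_gt0 k_gt0 size_lot _].
case: cfg => pc M [/= pc44 [H [MH [R1 [R2 [Hin zero]]]]]]; subst pc.
have le_evD : size (encode_voters (inst_lot I)) <= D by rewrite /D size_encode; lia.
have le24D : 24 <= D by rewrite /D size_encode; lia.
have Hn := stored_head Hin; have {}Hin := stored_behead Hin.
have Hm := stored_head Hin; have {}Hin := stored_behead Hin.
have Hk := stored_head Hin; have {}Hin := stored_behead Hin.
set p := D + 1 + 1 + 1 in Hin; set B := p + p.
do 9 advance.
apply: reach_seq.
apply: (reach_mono (b := 5 * inst_n I + 2)
         (Q := threshold_found (inst_n I) (inst_m I) (inst_k I) p B H)) => //; last first.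
  by apply: (threshold_loop (q := 0) _ MH) => //; lia.
case=> pc' M' [/= -> MH' [R1' R2' R3' R4' R5'] R6' thr].
set q := M' 7 in thr; have R7' : M' 7 = q by [].
clearbody q.
have q_gt0 : 0 < q by rewrite ltnNge thr mul0n -ltnNge.
do 2 advance.
have state : tally_state (inst_n I) (inst_m I) (inst_k I) B q 1 (fun=> 0)
    (undup (cands_of I)) [::] p (encode_voters (inst_lot I) ++ [::]) 60 (60, M').
  apply: (tally_stateI MH') => //.
  - rewrite_reg 8; rewrite (@eq_count _ _ pred0) ?count_pred0 // => c.
    by rewrite in_nil /=; lia.
  - by rewrite cats0.
  - by rewrite cats0 /B /p; lia.
  - by move=> c; rewrite !zero ?in_nil // /B /p; lia.
apply: reach_mono (voters_loop _ _ _ (undup_uniq _) state) => //; try lia.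
- by move=> cfg' done; exists q.
- by move=> x; rewrite mem_undup.
Qed.

Definition halted_with (P : Prop) (cfg : nat * memory) :=
  nth IHalt prog cfg.1 = IHalt /\ (cfg.2 0 = 1 <-> P).

Lemma decide_block m k q U f C cfg : tally_done m k q U f cfg ->
  count (fun c => q <= f c) U = C -> reach prog 6 cfg (halted_with (C <= k <= m)).
Proof.
case: cfg => pc M [/= -> [H [MH [R4 [R5 R8]]]]] <-.
do 5 advance; case: ifP => /eqP fits.
  by advance; apply: reach_now; split=> //=; rewrite_reg 0; split=> // _; lia.
by apply: reach_now; split=> //=; rewrite_reg 0; split=> // ?; lia.
Qed.

Lemma size_bitsize s : size s <= bitsize s.
Proof.
by elim: s => [|x s IH]; rewrite /bitsize ?big_nil ?big_cons //= -/(bitsize s); lia.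
Qed.

Lemma size_encode_voters ds : size ds <= size (encode_voters ds).
Proof.
by elim: ds => //= d ds IH; rewrite /encode_voters /= size_cat -/(encode_voters ds); lia.
Qed.

Theorem theorem6 :
  exists (P : seq instr) (c d : nat),
    forall I : instance,
      valid_instance I -> singleton_lotteries I ->
      exists t : nat,
        (t <= c * (bitsize (encode I)).+1 ^ d)%N /\
        exists M : memory,
          exec P t (0%N, init_mem (encode I)) = Some M /\
          (M 0%N = 1%N <-> ExistsNecJR I).
Proof.
exists prog, 200, 1 => I valid singleton.
have [_ _ size_lot _] := valid.
set ev := encode_voters (inst_lot I).
have run : reach prog (8 * (8 * size (encode I)) + 60 +
                       (9 + (5 * inst_n I + 2) + (2 + (22 * size ev + 3))) + 6)
             (0, init_mem (encode I))
             (halted_with (#|popular I| <= inst_k I <= inst_m I)).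
  apply: reach_seq; apply: reach_seq.
  have le3 : 3 <= size (encode I) by rewrite size_encode.
  apply: reach_mono (relocate le3) => // cfg moved.
  apply: reach_mono (count_block valid moved) => // cfg' [q thr done].
  apply: decide_block done _.
  by rewrite -(count_popular valid); apply: eq_count => c; rewrite thr.
have [t [cfg [le_t runs [halt iff]]]] := run.
exists t.+1; split.
  move: le_t (size_bitsize (encode I)) (size_encode_voters (inst_lot I)).
  by rewrite size_encode -/ev size_lot expn1; lia.
exists cfg.2; split; first by rewrite -addn1 (exec_runs 1 runs) /= halt.
by rewrite iff existsNecJRE.
Qed.
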